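(* Let $\mathcal{B}_q=\{f\in\operatorname{End}_KV^{\otimes r}:\pi_r(T'_i)f=f\pi_r(T'_i)\ \text{for } i=1,\dots,r-1\}$, $\mathcal{B}_q^\dagger=\{f\in\operatorname{End}_KV^{\otimes r}:\pi_r(T'_i)f=-f\pi_r(T'_i)\ \text{for } i=1,\dots,r-1\}$ and $\mathcal{D}_q=\{f\in\operatorname{End}_KV^{\otimes r}:\pi_r(T'_1T'_{i+1})f=f\pi_r(T'_1T'_{i+1})\ \text{for } i=1,\dots,r-2\}$. Then $\mathcal{D}_q=\mathcal{B}_q\oplus\mathcal{B}_q^\dagger$.
   Context: $q$ is an indeterminate, $K=\mathbb{Q}(q)$, $r\ge2$, $m,n\ge0$ with $m+n\ge1$. $V$ is a $\mathbb{Z}_2$-graded $K$-vector space with basis $v_1,\dots,v_{m+n}$, where $|v_k|=0$ for $k\le m$ and $|v_k|=1$ for $k>m$. $T'$ is the operator on $V\otimes V$ given by $T'(v_k\otimes v_k)=(-1)^{|v_k|}v_k\otimes v_k$; for $k<l$, $T'(v_k\otimes v_l)=\frac{2(-1)^{|v_k||v_l|}}{q+q^{-1}}v_l\otimes v_k+\frac{q-q^{-1}}{q+q^{-1}}v_k\otimes v_l$; for $k>l$, $T'(v_k\otimes v_l)=\frac{2(-1)^{|v_k||v_l|}}{q+q^{-1}}v_l\otimes v_k-\frac{q-q^{-1}}{q+q^{-1}}v_k\otimes v_l$. The $q$-permutation representation $\pi_r$ of the Iwahori–Hecke algebra $\mathcal{H}_{K,r}(q)$ (generators $T_i$, $T_i^2=(q-q^{-1})T_i+1$,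 braid relations) on $V^{\otimes r}$ is the representation with $\pi_r(T'_i)=\mathrm{Id}^{\otimes i-1}\otimes T'\otimes\mathrm{Id}^{\otimes r-i-1}$, where $T'_i=\frac{2T_i-(q-q^{-1})}{q+q^{-1}}$. *)

From HB Require Import structures.
From mathcomp Require Import all_boot all_order all_algebra.
From mathcomp Require Import fraction.
Set Implicit Arguments. Unset Strict Implicit. Unset Printing Implicit Defensive.
Import Order.TTheory GRing.Theory Num.Theory.
Local Open Scope ring_scope.

(* K = Q(q): the field of fractions of Q[q]; q is the indeterminate. *)
Definition K : fieldType := {fraction {poly rat}}.
Definition q : K := tofrac ('X : {poly rat}).

(* Basis vectors v_1..v_{m+n} are indexed (0-based) by k : 'I_(m+n);
   parity |v_k| = 1 iff k >= m (0-based). *)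
Definition par (m n : nat) (k : 'I_(m + n)) : bool := (m <= k)%N.

(* Tcoef m n a b k l = coefficient of v_a (x) v_b in T'(v_k (x) v_l). *)
Definition Tcoef (m n : nat) (a b k l : 'I_(m + n)) : K :=
  let c := 2 / (q + q^-1) in
  let d := (q - q^-1) / (q + q^-1) in
  if k == l then
    (if (a == k) && (b == k) then (-1) ^+ par k else 0)
  else
    c * (-1) ^+ (par k && par l) * ((a == l) && (b == k))%:R
    + (if (k < l)%N then d else - d) * ((a == k) && (b == l))%:R.

(* Basis of V^{(x) r}: words x : 'I_r -> 'I_(m+n), x <-> v_{x 0} (x) ... (x) v_{x (r-1)}. *)
Definition word (m n r : nat) := {ffun 'I_r -> 'I_(m + n)}.

(* Endomorphisms of V^{(x) r} as matrices indexed by words: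
   f (x, y) = coefficient of e_x in f(e_y). *)
Definition Endo (m n r : nat) := {ffun word m n r * word m n r -> K}.

Definition emul (m n r : nat) (f g : Endo m n r) : Endo m n r :=
  [ffun p => \sum_(y : word m n r) f (p.1, y) * g (y, p.2)].

(* pi_r(T'_i): T' acting on the adjacent tensor positions i0 and i1 = i0+1
   (0-based), identity elsewhere. *)
Definition piT {m n r : nat} (i0 i1 : 'I_r) : Endo m n r :=
  [ffun p : word m n r * word m n r => let x : word m n r := p.1 in let y : word m n r := p.2 in
     if [forall k : 'I_r, (k != i0) && (k != i1) ==> (x k == y k)]
     then Tcoef (x i0) (x i1) (y i0) (y i1) else 0].

(* The three commutant spaces. Position i0 (0-based) with i1 = i0+1 corresponds
   to the generator T'_{i0+1} of the paper. *)
Definition inB (m n r : nat) (f : Endo m n r) : Prop :=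
  forall i0 i1 : 'I_r, val i1 = (val i0).+1 ->
    emul (piT i0 i1) f = emul f (piT i0 i1).

Definition inBdag (m n r : nat) (f : Endo m n r) : Prop :=
  forall i0 i1 : 'I_r, val i1 = (val i0).+1 ->
    emul (piT i0 i1) f = - emul f (piT i0 i1).

(* D_q: commute with pi_r(T'_1 T'_{i+1}) = pi_r(T'_1) pi_r(T'_{i+1}), i = 1..r-2,
   i.e. positions (0,1) and (i0,i0+1) with 1 <= i0. *)
Definition inD (m n r : nat) (f : Endo m n r) : Prop :=
  forall a0 a1 i0 i1 : 'I_r, val a0 = 0%N -> val a1 = 1%N ->
    (0 < val i0)%N -> val i1 = (val i0).+1 ->
    emul (emul (piT a0 a1) (piT i0 i1)) f = emul f (emul (piT a0 a1) (piT i0 i1)).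

From HB Require Import structures.
From mathcomp Require Import all_boot all_order all_algebra fraction ring.
Set Implicit Arguments.
Unset Strict Implicit.
Unset Printing Implicit Defensive.
Import GRing.Theory.
Local Open Scope ring_scope.

(* Since T'^2 = 1, every P_i := pi_r(T'_i) is an involution of the ring
   End(V^{(x) r}), in which 2 is invertible.  If f commutes with P_1 P_i, then
   P_i f P_i = P_1 f P_1 =: s for every i, and f = (f + s)/2 + (f - s)/2 where
   the first summand commutes and the second anticommutes with every P_i.
   Conversely, both kinds of elements commute with each product P_1 P_i, and an
   element that both commutes and anticommutes with an involution is 0. *)

Lemma sqr_div_add_inv (F : fieldType) (x : F) : x + x^-1 != 0 ->
  (2 / (x + x^-1)) ^+ 2 + ((x - x^-1) / (x + x^-1)) ^+ 2 = 1.
Proof.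
move=> xx; have x0 : x != 0 by apply: contraNneq xx => ->; rewrite invr0 addr0.
have xx1 : x * x + 1 != 0 by rewrite -[1](divff x0) -mulrDr mulf_neq0.
by field; rewrite x0 xx1.
Qed.

Lemma sum_mul_delta (R : pzSemiRingType) (T : finType) (F : T -> R) (a : T) :
  \sum_j F j * (j == a)%:R = F a.
Proof. by rewrite (bigD1 a) //= eqxx mulr1 big1 ?addr0 // => j /negbTE ->; rewrite mulr0. Qed.

Section InvolutionCommutants.
Variable R : pzRingType.
Implicit Types x y z f h : R.

Definition anticomm x y := x * y = - (y * x).

Lemma anticommMr x y z : anticomm x y -> GRing.comm x z -> anticomm x (y * z).
Proof. by rewrite /anticomm => xy xz; rewrite mulrA xy mulNr -mulrA xz mulrA. Qed.

Lemma commM_anticomm x y z : anticomm x z -> anticomm y z -> GRing.comm (x * y) z.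
Proof.
by rewrite /anticomm => xz yz; rewrite /GRing.comm -mulrA yz mulrN mulrA xz mulNr opprK mulrA.
Qed.

Lemma comm_half h : h *+ 2 = 1 -> forall y, GRing.comm y h.
Proof.
move=> h2 y; apply/esym.
have -> : h * y = (h * y * h) *+ 2 by rewrite -mulrnAr h2 mulr1.
by rewrite -!mulrnAl h2 mul1r.
Qed.

Lemma halvesD f s h : h *+ 2 = 1 -> (f + s) * h + (f - s) * h = f.
Proof.
by move=> h2; rewrite -mulrDl addrACA subrr addr0 -mulr2n mulrnAl -mulrnAr h2 mulr1.
Qed.

Section Involution.
Variable x : R.
Hypothesis xx : x * x = 1.

Lemma invol_conj_eq y f : y * y = 1 -> GRing.comm (x * y) f -> x * f * x = y * f * y.
Proof.
move=> yy xyf; have := congr1 (fun g => x * g * y) xyf.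
by rewrite !mulrA xx mul1r -!mulrA yy mulr1.
Qed.

Let conjL f : x * (x * f * x) = f * x. Proof. by rewrite !mulrA xx mul1r. Qed.
Let conjR f : x * f * x * x = x * f. Proof. by rewrite -mulrA xx mulr1. Qed.

Lemma comm_add_conj f : GRing.comm x (f + x * f * x).
Proof. by rewrite /GRing.comm mulrDr mulrDl conjL conjR addrC. Qed.

Lemma anticomm_sub_conj f : anticomm x (f - x * f * x).
Proof. by rewrite /anticomm mulrBr mulrBl conjL conjR opprB. Qed.

Lemma comm_anticomm_eq0 f h : h *+ 2 = 1 -> GRing.comm x f -> anticomm x f -> f = 0.
Proof.
move=> h2 xf; rewrite /anticomm xf => /eqP; rewrite -subr_eq0 opprK -mulr2n => /eqP fx0.
by rewrite -[f]mulr1 -xx mulrA -[f * x]mulr1 -h2 mulrnAr -mulrnAl fx0 mul0r mul0r.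
Qed.

End Involution.
End InvolutionCommutants.

Lemma two_neq0 : (2 : K) != 0.
Proof.
have -> : (2 : K) = tofrac (2 : {poly rat}) by rewrite rmorph_nat.
by rewrite tofrac_eq0 -polyC_natr polyC_eq0.
Qed.

Lemma q_add_inv_neq0 : q + q^-1 != 0.
Proof.
have q0 : q != 0 by rewrite tofrac_eq0 polyX_eq0.
have qq : q * (q + q^-1) = tofrac ('X ^+ 2 + 1 : {poly rat}).
  by rewrite mulrDr divff // rmorphD rmorphXn rmorph1 expr2.
apply/eqP => qq0; move: qq; rewrite qq0 mulr0 => /esym/eqP; rewrite tofrac_eq0.
by move=> /eqP/(congr1 (horner^~ 0)); rewrite !hornerE /= => /eqP; rewrite oner_eq0.
Qed.

Local Notation tc := (2 / (q + q^-1)).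
Local Notation td := ((q - q^-1) / (q + q^-1)).

Lemma tc_td_sqr : tc ^+ 2 + td ^+ 2 = 1.
Proof. exact: sqr_div_add_inv q_add_inv_neq0. Qed.

Section TwoSite.
Variables m n : nat.
Implicit Types (u v k l : 'I_(m + n)) (j : 'I_(m + n) * 'I_(m + n)).

Lemma Tcoef_diag j k : Tcoef j.1 j.2 k k = (-1) ^+ par k * (j == (k, k))%:R.
Proof.
by case: j => a b; rewrite /Tcoef eqxx xpair_eqE; case: (_ && _); rewrite ?mulr1 ?mulr0.
Qed.

Lemma Tcoef_offdiag j k l : k != l ->
  Tcoef j.1 j.2 k l = tc * (-1) ^+ (par k && par l) * (j == (l, k))%:R
                      + (if (k < l)%N then td else - td) * (j == (k, l))%:R.
Proof. by case: j => a b kl; rewrite /Tcoef (negbTE kl) !xpair_eqE. Qed.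

Lemma Tcoef_invol u v k l :
  \sum_j Tcoef u v j.1 j.2 * Tcoef j.1 j.2 k l = ((u == k) && (v == l))%:R.
Proof.
have sign2 (b : bool) : ((-1) ^+ b : K) * (-1) ^+ b = 1 by rewrite -signr_addb addbb.
case: (eqVneq k l) => [<- | kl].
  under eq_bigr do rewrite Tcoef_diag mulrCA.
  by rewrite -mulr_sumr sum_mul_delta /= (Tcoef_diag (u, v)) mulrA sign2 mul1r xpair_eqE.
(* For k != l, T' acts on span(v_k v_l, v_l v_k) by a symmetric matrix of
   trace 0 and determinant -(tc^2 + td^2) = -1, i.e. by a reflection. *)
set s : K := (-1) ^+ (par k && par l); set e := if (k < l)%N then td else - td.
under eq_bigr do rewrite Tcoef_offdiag // mulrDr !(mulrCA (Tcoef _ _ _ _)).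
rewrite big_split /= -!mulr_sumr !sum_mul_delta /=.
have lk : l != k by rewrite eq_sym.
have e_swap : (if (l < k)%N then td else - td) = - e.
  rewrite /e; case: ltngtP => [_|_|klE]; rewrite ?opprK //.
  by move/val_inj: klE kl => ->; rewrite eqxx.
rewrite -/s -/e (Tcoef_offdiag (u, v) kl) (Tcoef_offdiag (u, v) lk) andbC -/s e_swap /=.
rewrite !xpair_eqE; set A := ((u == k) && (v == l))%:R; set B := ((u == l) && (v == k))%:R.
have e2 : e ^+ 2 = td ^+ 2 by rewrite /e; case: ifP; rewrite ?sqrrN.
rewrite -/e [LHS](_ : _ = A * (tc ^+ 2 * (s * s) + e ^+ 2)); last by ring.
by rewrite sign2 mulr1 e2 tc_td_sqr mulr1.
Qed.
End TwoSite.

(* [Endo m n r] already carries the pointwise ring structure of finite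
   functions; the alias [endo_ring m n r] is the ring under composition [emul]. *)
Definition endo_ring (m n r : nat) := Endo m n r.
HB.instance Definition _ m n r := GRing.Zmodule.on (endo_ring m n r).

Section EndoRing.
Variables m n r : nat.
Local Notation endo := (endo_ring m n r).
Local Notation word := (word m n r).

Definition endo_one : endo := [ffun p : word * word => (p.1 == p.2)%:R].
Definition endo_mul : endo -> endo -> endo := @emul m n r.

Fact endo_mulA : associative endo_mul.
Proof.
move=> f g h; apply/ffunP => -[x z]; rewrite /endo_mul !ffunE /=; symmetry.
under eq_bigr do rewrite ffunE /= big_distrl.
rewrite exchange_big; apply: eq_bigr => y _; rewrite ffunE big_distrr /=.
by apply: eq_bigr => w _; rewrite mulrA.
Qed.

Fact endo_mul1l : left_id endo_one endo_mul.
Proof.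
move=> f; apply/ffunP => -[x z]; rewrite /endo_mul ffunE (bigD1 x) //= big1 ?addr0.
  by rewrite ffunE eqxx mul1r.
by move=> y /negbTE yx; rewrite ffunE /= eq_sym yx mul0r.
Qed.

Fact endo_mul1r : right_id endo_one endo_mul.
Proof.
move=> f; apply/ffunP => -[x z]; rewrite /endo_mul ffunE (bigD1 z) //= big1 ?addr0.
  by rewrite ffunE eqxx mulr1.
by move=> y /negbTE yz; rewrite ffunE /= yz mulr0.
Qed.

Fact endo_mulDl : left_distributive endo_mul +%R.
Proof.
move=> f g h; apply/ffunP => p; rewrite /endo_mul !ffunE -big_split.
by apply: eq_bigr => y _; rewrite ffunE mulrDl.
Qed.

Fact endo_mulDr : right_distributive endo_mul +%R.
Proof.
move=> f g h; apply/ffunP => p; rewrite /endo_mul !ffunE -big_split.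
by apply: eq_bigr => y _; rewrite ffunE mulrDr.
Qed.

HB.instance Definition _ := GRing.Zmodule_isPzRing.Build endo
  endo_mulA endo_mul1l endo_mul1r endo_mulDl endo_mulDr.

Lemma endo_oneE (p : word * word) : (1 : endo) p = (p.1 == p.2)%:R.
Proof. by rewrite ffunE. Qed.

Definition endo_half : endo := [ffun p : word * word => (p.1 == p.2)%:R / 2].

Lemma endo_half2 : endo_half *+ 2 = 1.
Proof.
apply/ffunP => p; rewrite ffunMnE !ffunE -mulrnAr -(mulr_natr 2^-1).
by rewrite mulVf ?two_neq0 // mulr1.
Qed.

Section TwoSiteLift.
Variables i0 i1 : 'I_r.
Hypothesis i01 : i0 != i1.

Definition agree (x y : word) := [forall k, (k != i0) && (k != i1) ==> (x k == y k)].

Definition upd (x : word) (j : 'I_(m + n) * 'I_(m + n)) : word :=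
  [ffun k => if k == i0 then j.1 else if k == i1 then j.2 else x k].

Lemma piTE x y :
  piT i0 i1 (x, y) = if agree x y then Tcoef (x i0) (x i1) (y i0) (y i1) else 0.
Proof. by rewrite ffunE. Qed.

Lemma upd_i0 x j : upd x j i0 = j.1.
Proof. by rewrite ffunE eqxx. Qed.

Lemma upd_i1 x j : upd x j i1 = j.2.
Proof. by rewrite ffunE eq_sym (negbTE i01) eqxx. Qed.

Lemma agree_upd x j : agree x (upd x j).
Proof.
by apply/forallP => k; apply/implyP => /andP[/negbTE k0 /negbTE k1]; rewrite ffunE k0 k1.
Qed.

Lemma agree_updl x j z : agree (upd x j) z = agree x z.
Proof.
apply: eq_forallb => k; case: (boolP ((k != i0) && (k != i1))) => //=.
by move=> /andP[/negbTE k0 /negbTE k1]; rewrite ffunE k0 k1.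
Qed.

Lemma updK x y : agree x y -> upd x (y i0, y i1) = y.
Proof.
move=> /forallP xy; apply/ffunP => k; rewrite ffunE /=.
case: (eqVneq k i0) => [-> //| k0]; case: (eqVneq k i1) => [-> //| k1].
by apply/eqP; have := xy k; rewrite k0 k1.
Qed.

Lemma agree_eq x z : agree x z -> (x == z) = (x i0 == z i0) && (x i1 == z i1).
Proof.
move=> xz; apply/eqP/andP => [-> // | [/eqP x0 /eqP x1]].
by rewrite -(updK xz) -x0 -x1 updK //; apply/forallP => k; apply/implyP.
Qed.

Lemma sum_agree x (F : word -> K) :
  \sum_(y | agree x y) F y = \sum_(j : 'I_(m + n) * 'I_(m + n)) F (upd x j).
Proof.
rewrite (reindex_onto (upd x) (fun y => (y i0, y i1))) /=; last exact: updK.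
apply: eq_bigl => j; rewrite agree_upd upd_i0 upd_i1.
by case: j => a b; rewrite !eqxx.
Qed.

Lemma piT_invol : (piT i0 i1 : endo) * piT i0 i1 = 1.
Proof.
apply/ffunP => -[x z]; rewrite /GRing.mul /= /endo_mul ffunE /=.
rewrite (bigID (agree x)) /= [X in _ + X]big1 ?addr0 => [|y /negbTE xy]; last first.
  by rewrite piTE xy mul0r.
rewrite sum_agree; under eq_bigr do rewrite !piTE agree_upd agree_updl upd_i0 upd_i1.
rewrite endo_oneE /=; case: (boolP (agree x z)) => xz.
  by rewrite Tcoef_invol agree_eq.
rewrite big1 => [|j _]; last by rewrite mulr0.
by case: eqP xz => // ->; rewrite /agree; case/forallP => k; apply/implyP.
Qed.
End TwoSiteLift.
End EndoRing.
Arguments endo_half {m n r}.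
Arguments endo_half2 {m n r}.

Section Commutants.
Variables m n r : nat.
Local Notation endo := (endo_ring m n r).

Lemma piT_adj_invol (i0 i1 : 'I_r) : val i1 = (val i0).+1 ->
  (piT i0 i1 : endo) * piT i0 i1 = 1.
Proof. by move=> i01; apply: piT_invol; apply/eqP => /(congr1 val); rewrite i01 => /n_Sn. Qed.

Lemma endo_addE (g h : Endo m n r) : g + h = (g : endo) + h.
Proof. by []. Qed.

Lemma inBE (f : endo) :
  inB f <-> forall i0 i1 : 'I_r, val i1 = (val i0).+1 -> GRing.comm (piT i0 i1 : endo) f.
Proof. by []. Qed.

Lemma inBdagE (f : endo) :
  inBdag f <-> forall i0 i1 : 'I_r, val i1 = (val i0).+1 -> anticomm (piT i0 i1 : endo) f.
Proof. by []. Qed.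

Lemma inDE (f : endo) :
  inD f <-> forall a0 a1 i0 i1 : 'I_r, val a0 = 0%N -> val a1 = 1%N ->
    (0 < val i0)%N -> val i1 = (val i0).+1 ->
    GRing.comm ((piT a0 a1 : endo) * piT i0 i1) f.
Proof. by []. Qed.
End Commutants.
Arguments piT_adj_invol {m n r i0 i1}.

Theorem lemma5p1 (m n r : nat) (hr : (2 <= r)%N) (hmn : (1 <= m + n)%N) :
  (forall f : Endo m n r,
     inD f <-> exists g h : Endo m n r, [/\ inB g, inBdag h & f = g + h])
  /\ (forall f : Endo m n r, inB f -> inBdag f -> f = 0).
Proof.
pose a0 : 'I_r := Ordinal (ltnW hr); pose a1 : 'I_r := Ordinal hr.
pose P : endo_ring m n r := piT a0 a1.
have PP : P * P = 1 by exact: piT_adj_invol.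
have half2 : (endo_half : endo_ring m n r) *+ 2 = 1 := endo_half2.
split => [f|f /inBE Bf /inBdagE Bdf]; last first.
  have := comm_anticomm_eq0 PP half2 (Bf a0 a1 erefl) (Bdf a0 a1 erefl).
  by apply.
(* Without this, [_ * _] on [f] would elaborate to the pointwise product. *)
change (endo_ring m n r) in f.
split => [/inDE Df | [g [h [/inBE Bg /inBdagE Bh ->]]]]; last first.
  apply/inDE => b0 b1 i0 i1 b00 b11 _ i01.
  have b01 : val b1 = (val b0).+1 by rewrite b00 b11.
  rewrite endo_addE; apply: commrD.
    by apply/commr_sym/commrM; apply/commr_sym; [exact: Bg b01 | exact: Bg i01].
  exact: commM_anticomm (Bh _ _ b01) (Bh _ _ i01).
set s := P * f * P.
have conj_s i0 i1 : val i1 = (val i0).+1 -> (piT i0 i1 : endo_ring m n r) * f * piT i0 i1 = s.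
  move=> i01; case: (posnP (val i0)) => [i00 | i0_gt0].
    have -> : i0 = a0 by apply: val_inj.
    by have -> : i1 = a1 by apply: val_inj; rewrite i01 i00.
  have Dfi := Df a0 a1 i0 i1 erefl erefl i0_gt0 i01.
  by rewrite /s (invol_conj_eq PP (piT_adj_invol i01) Dfi).
exists ((f + s) * endo_half), ((f - s) * endo_half); split.
- apply/inBE => i0 i1 i01; apply: commrM; last exact (comm_half half2 _).
  rewrite -(conj_s _ _ i01); exact (comm_add_conj (piT_adj_invol i01) f).
- apply/inBdagE => i0 i1 i01; apply: anticommMr; last exact (comm_half half2 _).
  rewrite -(conj_s _ _ i01); exact (anticomm_sub_conj (piT_adj_invol i01) f).
- by rewrite endo_addE halvesD.
Qed.
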